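(* Let $(\mathcal{A},\varphi)$ be a unital algebra with a linear functional $\varphi$, $\varphi(\mathbf 1)=1$. For all $n\in\mathbb{N}_+$, $k\in[n]$ and $a_1,\dots,a_{n+1}\in\mathcal{A}$, $$\kappa^*_{n+1}(a_1,\dots,a_{n+1})=\kappa^*_n(a_1,\dots,a_{k-1},a_ka_{k+1},a_{k+2},\dots,a_{n+1})-\kappa^*_k(a_1,\dots,a_k)\,\kappa^*_{n+1-k}(a_{k+1},\dots,a_{n+1}).$$ Moreover, if $\mathcal{A}=B(\mathcal H)$ for a Hilbert space $\mathcal H$ and $\varphi(a)=\langle a\xi,\xi\rangle$ for a unit vector $\xi$, then $\kappa^*_n(a_1,\dots,a_n)=\varphi(a_1P^\perp a_2P^\perp\cdots P^\perp a_n)$, where $P^\perp$ is the orthogonal projection onto $(\mathbb{C}\xi)^\perp$.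
   Context: The multilinear functionals $\kappa^*_n$ are defined recursively by $\kappa^*_1(a)=\varphi(a)$ and $\kappa^*_{n+1}(a_1,\dots,a_{n+1})=\kappa^*_n(a_1a_2,a_3,\dots,a_{n+1})-\varphi(a_1)\kappa^*_n(a_2,\dots,a_{n+1})$. *)

From HB Require Import structures.
From mathcomp Require Import all_boot all_order all_algebra.
Set Implicit Arguments. Unset Strict Implicit. Unset Printing Implicit Defensive.
Import Order.TTheory GRing.Theory Num.Theory.
Local Open Scope ring_scope.

(* kappa* for a multiplication [mul] on a carrier A and a
   functional [phi : A -> F].  kst m s is kappa*_m on the list s (m = size s). *)
Section KappaStar.
Variables (F : pzRingType) (A : Type) (mul : A -> A -> A) (phi : A -> F).

Fixpoint kst (m : nat) (s : seq A) : F :=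
  match m with
  | 0 => 0
  | m'.+1 =>
    match s with
    | [::] => 0
    | [:: a] => phi a
    | a1 :: ((a2 :: t) as s') => kst m' (mul a1 a2 :: t) - phi a1 * kst m' s'
    end
  end.

Definition kappa (s : seq A) : F := kst (size s) s.

Fixpoint alt_prod (p : A) (s : seq A) (dflt : A) : A :=
  match s with
  | [::] => dflt
  | [:: a] => a
  | a :: t => mul a (mul p (alt_prod p t dflt))
  end.
End KappaStar.

From mathcomp Require Import all_boot all_order all_algebra.
Import GRing.Theory.
Local Open Scope ring_scope.

(* Both parts of the theorem are proved by induction on the number of
   arguments, driven by the defining recursion of kappa*, which we read as
     kappa*(a :: s) = kappa*(lmul a s) - phi(a) kappa*(s),
   where [lmul a s] multiplies the head of [s] on the left by [a].
   Neither part uses linearity of phi, phi(1) = 1 or the ring structure of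
   the algebra: only associativity of the product matters.
   - Part 1 (multiplicative splitting): merging the adjacent arguments at
     position i commutes with [lmul], so one induction on i splits kappa*
     into the merged term and the product of the two blocks of cumulants.
   - Part 2 (operator model): whenever phi(a x) - phi(a) phi(x) =
     phi(a p x) for all arguments a of a class closed under products,
     kappa*_n(a_1, ..., a_n) = phi(a_1 p a_2 p ... p a_n).  For
     phi(a) = <a xi, xi> this one-step identity holds for every linear a
     with p the projection onto the complement of xi. *)

Section AssociativeProduct.
Variables (F : pzRingType) (A : Type) (mul : A -> A -> A) (phi : A -> F).
Hypothesis mulA : associative mul.

Local Notation kappa := (kappa mul phi).

Definition lmul (a : A) (s : seq A) : seq A :=
  if s is b :: t then mul a b :: t else [::].

Lemma size_lmul a s : size (lmul a s) = size s.
Proof. by case: s. Qed.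

Lemma kappa_cons a s : (0 < size s)%N ->
  kappa (a :: s) = kappa (lmul a s) - phi a * kappa s.
Proof. by case: s. Qed.

Definition merge_at (x0 : A) (i : nat) (s : seq A) : seq A :=
  take i s ++ (mul (nth x0 s i) (nth x0 s i.+1)) :: drop i.+2 s.

Lemma merge_at_cons x0 i a s : merge_at x0 i.+1 (a :: s) = a :: merge_at x0 i s.
Proof. by []. Qed.

(* Multiplying the first entry commutes with merging two entries
   (for the merge at the very front this is associativity). *)
Lemma merge_at_lmul x0 i a s : (i.+1 < size s)%N ->
  merge_at x0 i (lmul a s) = lmul a (merge_at x0 i s).
Proof. by case: s => [|b [|c t]] //; case: i => [|i] //= _; rewrite mulA. Qed.

Lemma size_merge_at x0 i s : (i.+1 < size s)%N -> (0 < size (merge_at x0 i s))%N.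
Proof. by rewrite size_cat /= addnS. Qed.

(* The noncommutative algebraic identity combining two instances of the
   induction hypothesis. *)
Lemma split_identity (x y z w u p : F) :
  x - y * z - p * (w - u * z) = (x - p * w) - (y - p * u) * z.
Proof.
rewrite mulrBr mulrBl mulrA !opprB -!addrA; congr (x + _).
by rewrite addrCA [RHS]addrCA (addrC (- (y * z))).
Qed.

Lemma kappa_split x0 i s : (i.+1 < size s)%N ->
  kappa s = kappa (merge_at x0 i s) - kappa (take i.+1 s) * kappa (drop i.+1 s).
Proof.
elim: i s => [|i IH] [|a [|b t]] lt_i_s //.
  by rewrite kappa_cons // /merge_at /= drop0.
have lt_i_bt : (i.+1 < size (b :: t))%N := lt_i_s.
rewrite merge_at_cons kappa_cons // (kappa_cons _ _ (size_merge_at x0 _ _ lt_i_bt)).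
rewrite (kappa_cons a (take i.+1 (b :: t))) //.
rewrite (IH (lmul a (b :: t))) ?size_lmul // (IH (b :: t)) //.
by rewrite merge_at_lmul // split_identity.
Qed.

Variables (p : A) (admissible : A -> Prop).
Hypothesis admissibleM : forall a b, admissible a -> admissible b -> admissible (mul a b).
Hypothesis phi_step : forall a x, admissible a ->
  phi (mul a x) - phi a * phi x = phi (mul a (mul p x)).

Lemma alt_prod_lmul x0 a s : (0 < size s)%N ->
  alt_prod mul p (lmul a s) x0 = mul a (alt_prod mul p s x0).
Proof. by case: s => [|b [|c t]] //= _; rewrite mulA. Qed.

Lemma kappa_alt_prod x0 n s : size s = n.+1 ->
  (forall i, (i < size s)%N -> admissible (nth x0 s i)) ->
  kappa s = phi (alt_prod mul p s x0).
Proof.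
elim: n s => [|n IH] [|a [|b t]] // [size_t] adm_s.
have adm_a : admissible a by exact: (adm_s 0%N).
have adm_bt i : (i < size (b :: t))%N -> admissible (nth x0 (b :: t) i).
  by move=> lt_i; exact: (adm_s i.+1).
have adm_abt i : (i < size (lmul a (b :: t)))%N ->
    admissible (nth x0 (lmul a (b :: t)) i).
  case: i => [|i] lt_i; first by apply: admissibleM => //; exact: (adm_s 1%N).
  exact: (adm_s i.+2).
have size_bt : size (b :: t) = n.+1 by rewrite /= size_t.
rewrite kappa_cons // (IH (lmul a (b :: t))) ?size_lmul // (IH (b :: t)) //.
by rewrite alt_prod_lmul // phi_step.
Qed.

End AssociativeProduct.

Lemma vector_state_step {R : comPzRingType} {V : lmodType R}
    {ip : V -> V -> R} (xi : V) :
  (forall (c : R) (u v w : V), ip (c *: u + v) w = c * ip u w + ip v w) ->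
  forall a x : V -> V, linear a ->
  ip (a (x xi)) xi - ip (a xi) xi * ip (x xi) xi =
  ip (a (x xi - ip (x xi) xi *: xi)) xi.
Proof.
move=> ip_linear a x a_linear.
by rewrite [x xi - _]addrC -scaleNr a_linear ip_linear mulNr addrC mulrC.
Qed.

Theorem mainTheorem10 :
  (* Part 1: unital algebra A over a field F, linear phi with phi 1 = 1 *)
  (forall (F : fieldType) (A : lalgType F) (phi : A -> F),
     (forall (c : F) (x y : A), phi (c *: x + y) = c * phi x + phi y) ->
     phi 1 = 1 ->
     forall (n k : nat) (s : seq A),
       size s = n.+1 -> (0 < n)%N -> (0 < k <= n)%N ->
       kappa *%R phi s =
         kappa *%R phi (take k.-1 s ++ (nth 0 s k.-1 * nth 0 s k) :: drop k.+1 s)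
         - kappa *%R phi (take k s) * kappa *%R phi (drop k s))
  /\
  (* Part 2: operators on a complex inner product space, phi(a) = <a xi, xi> *)
  (forall (C : numClosedFieldType) (V : lmodType C) (ip : V -> V -> C),
     (forall (c : C) (u v w : V), ip (c *: u + v) w = c * ip u w + ip v w) ->
     (forall u v : V, ip u v = (ip v u)^*) ->
     (forall v : V, v != 0 -> 0 < ip v v) ->
     forall xi : V, ip xi xi = 1 ->
     let phi := fun a : V -> V => ip (a xi) xi in
     let Pperp := fun v : V => v - ip v xi *: xi in
     forall s : seq (V -> V),
       (0 < size s)%N ->
       (forall i, (i < size s)%N -> forall (c : C) (u v : V),
          nth id s i (c *: u + v) = c *: nth id s i u + nth id s i v) ->
       kappa (fun a b => a \o b) phi s = phi (alt_prod (fun a b => a \o b) Pperp s id)).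
Proof.
split.
  move=> F A phi _ _ n [//|i] s size_s _ /andP[_ le_i_n].
  by apply: (@kappa_split F A *%R phi (@mulrA A) 0 i s); rewrite size_s ltnS.
move=> C V ip ip_linear _ _ xi _ phi Pperp [//|a s] _ s_linear.
have linearM (f g : V -> V) : linear f -> linear g -> linear (f \o g).
  by move=> f_linear g_linear c u v; rewrite /= g_linear f_linear.
exact: (@kappa_alt_prod C (V -> V) (fun f g => f \o g) phi (fun _ _ _ => erefl)
          Pperp (fun f => linear f) linearM (vector_state_step xi ip_linear)
          id (size s) (a :: s) erefl s_linear).
Qed.
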